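(* Let $q$ be a power of $2$, $n\ge 2$, and let $M=(m_{ij})$ be an $n\times n$ matrix with entries in $\mathbb{F}_q$. (a) $\mathrm{Num}'_0(M)_q\neq\emptyset$, and either $0\in\mathrm{Num}'_0(M)$ or $\mathrm{Num}_0(M)\supseteq\mathbb{F}_q^*$. (b) $\mathrm{Num}'_0(M)_q=\{0\}$ if and only if $m_{ii}+m_{ij}+m_{ji}+m_{jj}=0$ for all $1\le i<j\le n$. (c) Assume $\mathrm{Num}'_0(M)_q\neq\{0\}$. If $n=2$ then $\mathrm{Num}'_0(M)_q=\mathbb{F}_q^*$; if $n=3$ then $\mathrm{Num}'_0(M)_q\supseteq\mathbb{F}_q^*$; if $n\ge 4$ then $\mathrm{Num}'_0(M)_q=\mathbb{F}_q$.
   Context: The Hermitian form on $\mathbb{F}_{q^2}^n$ is $\langle u,v\rangle=\sum_i u_i^q v_i$. For an $n\times n$ matrix $M$ over $\mathbb{F}_{q^2}$: $\mathrm{Num}_0(M)=\{\langle u,Mu\rangle: u\in\mathbb{F}_{q^2}^n,\ \langle u,u\rangle=0\}$ and $\mathrm{Num}'_0(M)=\{\langle u,Mu\rangle: u\in\mathbb{F}_{q^2}^n\setminus\{0\},\ \langle u,u\rangle=0\}$. For $M$ with entries in $\mathbb{F}_q$: $\mathrm{Num}'_0(M)_q=\{\langle u,Mu\rangle: u\in\mathbb{F}_q^n\setminus\{0\},\ \langle u,u\rangle=0\}$; for $u=(x_1,\dots,x_n)\in\mathbb{F}_q^n$, $\langle u,u\rangle=\sum x_i^2$ and $\langle u,Mu\rangle=\sum_{i,j}m_{ij}x_ix_j$.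 *)

From HB Require Import structures.
From mathcomp Require Import all_boot all_order all_algebra.
Set Implicit Arguments. Unset Strict Implicit. Unset Printing Implicit Defensive.
Import GRing.Theory.
Local Open Scope ring_scope.

(* L plays the role of F_{q^2} (a finite field with q^2 elements);
   F_q is its unique subfield of order q, namely {x | x^q = x}. *)

Section Defs.
Variables (L : finFieldType) (q n : nat).

Definition Fq : {set L} := [set x : L | x ^+ q == x].
Definition Fqstar : {set L} := Fq :\ 0.

Definition herm (u v : 'cV[L]_n) : L := \sum_(i < n) (u i 0) ^+ q * v i 0.

Definition inFqn (u : 'cV[L]_n) : bool := [forall i, u i 0 \in Fq].

Definition Num0 (M : 'M[L]_n) : {set L} :=
  [set herm u (M *m u) | u in [set u : 'cV[L]_n | herm u u == 0]].
Definition Num0' (M : 'M[L]_n) : {set L} :=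
  [set herm u (M *m u) | u in [set u : 'cV[L]_n | (u != 0) && (herm u u == 0)]].
Definition Num0'q (M : 'M[L]_n) : {set L} :=
  [set herm u (M *m u) |
     u in [set u : 'cV[L]_n | [&& inFqn u, u != 0 & herm u u == 0]]].
End Defs.

From HB Require Import structures.
From mathcomp Require Import all_boot all_order all_algebra all_field ring.
Import GRing.Theory.
Local Open Scope ring_scope.
Set Implicit Arguments. Unset Strict Implicit. Unset Printing Implicit Defensive.

(* For u in F_q^n the Hermitian form <u, Mv> is the bilinear form u^T M v, and in
   characteristic 2 <u, u> = (sum_i u_i)^2.  So Num'_0(M)_q is the set of values of the
   quadratic form Q(u) = u^T M u on the nonzero vectors of the hyperplane sum_i u_i = 0 of
   F_q^n.  At e_i + e_j, Q takes the value m_ii + m_ij + m_ji + m_jj, and if all these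
   vanish then Q vanishes on the whole hyperplane.  As Q(tu) = t^2 Q(u) and every element of
   F_q is a square, one nonzero value of Q yields all of F_q^*.  For n = 2 the hyperplane is
   the line through e_1 + e_2.  For n >= 4 it contains a 3-dimensional subspace, on which Q
   has a nontrivial zero: the polar form of a ternary form is alternating, hence has a
   nonzero radical vector v, and Q(tv + w) = t^2 Q(v) + Q(w) vanishes for t^2 = Q(w)/Q(v). *)

Lemma sum_skew_eq0 (V : nmodType) n (f : 'I_n -> 'I_n -> V) :
  (forall i j, f i j + f j i = 0) -> (forall i, f i i = 0) -> \sum_i \sum_j f i j = 0.
Proof.
elim: n f => [|n IH] f fA f0; first by rewrite big_ord0.
rewrite big_ord_recr /= big_ord_recr /= f0 addr0.
under eq_bigr => i _ do rewrite big_ord_recr /=.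
rewrite big_split /= IH // add0r -big_split /=.
by apply: big1 => i _; rewrite fA.
Qed.

Section ColumnSum.
Variables (R : pzSemiRingType) (n : nat).
Implicit Types (u v : 'cV[R]_n).

Lemma sum_colD u v : \sum_i (u + v) i 0 = \sum_i u i 0 + \sum_i v i 0.
Proof. by rewrite -big_split; apply: eq_bigr => i _; rewrite mxE. Qed.

Lemma sum_colZ a u : \sum_i (a *: u) i 0 = a * \sum_i u i 0.
Proof. by rewrite big_distrr; apply: eq_bigr => i _; rewrite mxE. Qed.

Lemma sum_col_delta i : \sum_l (delta_mx i 0 : 'cV[R]_n) l 0 = 1.
Proof.
rewrite (bigD1 i) //= big1 => [|l /negPf li]; first by rewrite mxE !eqxx addr0.
by rewrite mxE li.
Qed.

End ColumnSum.

Section QuadraticForm.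
Variables (R : comPzRingType) (n : nat).
Implicit Types (M : 'M[R]_n) (x y z : 'cV[R]_n).

Definition bform M x y : R := (x^T *m M *m y) 0 0.
Definition qform M x : R := bform M x x.

Lemma bformE M x y : bform M x y = \sum_i x i 0 * (M *m y) i 0.
Proof. by rewrite /bform -mulmxA mxE; apply: eq_bigr => i _; rewrite mxE. Qed.

Lemma bformDl M x y z : bform M (x + y) z = bform M x z + bform M y z.
Proof. by rewrite /bform linearD !mulmxDl mxE. Qed.

Lemma bformDr M x y z : bform M x (y + z) = bform M x y + bform M x z.
Proof. by rewrite /bform mulmxDr mxE. Qed.

Lemma bformZl M a x y : bform M (a *: x) y = a * bform M x y.
Proof. by rewrite /bform linearZ /= -!scalemxAl mxE. Qed.

Lemma bformZr M a x y : bform M x (a *: y) = a * bform M x y.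
Proof. by rewrite /bform -scalemxAr mxE. Qed.

Lemma bform_delta M i j : bform M (delta_mx i 0) (delta_mx j 0) = M i j.
Proof. by rewrite /bform trmx_delta -rowE -colE !mxE. Qed.

Lemma qformE M x : qform M x = \sum_i \sum_j x i 0 * M i j * x j 0.
Proof.
rewrite /qform bformE; apply: eq_bigr => i _.
by rewrite mxE big_distrr; apply: eq_bigr => j _; exact: mulrA.
Qed.

Lemma qformZ M a x : qform M (a *: x) = a ^+ 2 * qform M x.
Proof. by rewrite /qform bformZl bformZr mulrA expr2. Qed.

Lemma qformD M x y : qform M (x + y) = qform M x + qform M y + (bform M x y + bform M y x).
Proof. rewrite /qform !bformDl !bformDr; ring. Qed.

Lemma qform_delta_add M i j :
  qform M (delta_mx i 0 + delta_mx j 0) = M i i + M i j + M j i + M j j.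
Proof. by rewrite qformD /qform !bform_delta; ring. Qed.

Definition ternary_form (A B C D E G a b c : R) : R :=
  A * a ^+ 2 + B * b ^+ 2 + C * c ^+ 2 + D * a * b + E * a * c + G * b * c.

Lemma qform_comb3 M a b c x y z :
  qform M (a *: x + b *: y + c *: z) =
  ternary_form (qform M x) (qform M y) (qform M z)
    (bform M x y + bform M y x) (bform M x z + bform M z x) (bform M y z + bform M z y) a b c.
Proof. rewrite /ternary_form /qform !bformDl !bformDr !bformZl !bformZr; ring. Qed.

End QuadraticForm.

(* [(G, E, D)] spans the radical of the polar form, so the cross term is a multiple of 2. *)
Lemma ternary_form_shift (L : fieldType) (L2 : 2 \in [pchar L]) (A B C D E G t a b c : L) :
  ternary_form A B C D E G (t * G + a) (t * E + b) (t * D + c) =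
  t ^+ 2 * ternary_form A B C D E G G E D + ternary_form A B C D E G a b c.
Proof.
rewrite -[RHS]addr0 -(mul0r (t * (A * G * a + B * E * b + C * D * c + D * G * b + D * E * a + E * G * c))).
by rewrite -(pcharf0 L2) /ternary_form; ring.
Qed.

Section Subfield.
Variables (L : finFieldType) (k : nat).
Hypotheses (k_gt0 : (0 < k)%N) (L2 : 2 \in [pchar L]).
Local Notation q := (2 ^ k)%N.
Local Notation F := (Fq L q).

Lemma exprqD (x y : L) : (x + y) ^+ q = x ^+ q + y ^+ q.
Proof. by apply: exprDn_pchar; rewrite (eq_pnat _ (pcharf_eq L2)) pnatX pnat_id. Qed.

Lemma Fq0 : 0 \in F. Proof. by rewrite inE expr0n expn_eq0. Qed.
Lemma Fq1 : 1 \in F. Proof. by rewrite inE expr1n. Qed.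

Lemma FqD x y : x \in F -> y \in F -> x + y \in F.
Proof. by rewrite !inE exprqD => /eqP-> /eqP->. Qed.

Lemma FqM x y : x \in F -> y \in F -> x * y \in F.
Proof. by rewrite !inE exprMn => /eqP-> /eqP->. Qed.

Lemma FqV x : x \in F -> x^-1 \in F.
Proof. by rewrite !inE exprVn => /eqP->. Qed.

Lemma Fq_sum (I : finType) (f : I -> L) : (forall i, f i \in F) -> \sum_i f i \in F.
Proof. by move=> fF; apply: (big_ind (fun x => x \in F)); [exact: Fq0 | exact: FqD |]. Qed.

Lemma Fq_square x : x \in F -> exists2 y, y \in F & y ^+ 2 = x.
Proof.
rewrite inE => /eqP xq; exists (x ^+ (2 ^ k.-1)); last by rewrite -exprM -expnSr prednK.
by rewrite inE -exprM mulnC exprM xq.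
Qed.

Lemma ternary_form_isotropic A B C D E G :
  A \in F -> B \in F -> C \in F -> D \in F -> E \in F -> G \in F ->
  exists a b c, [/\ a \in F, b \in F, c \in F,
     [|| a != 0, b != 0 | c != 0] & ternary_form A B C D E G a b c = 0].
Proof.
move=> AF BF CF DF EF GF; set Q := ternary_form A B C D E G.
have QF a b c : a \in F -> b \in F -> c \in F -> Q a b c \in F.
  by move=> aF bF cF; rewrite /Q /ternary_form !FqD ?FqM.
have [/and3P[/eqP D0 /eqP E0 /eqP G0] | v_nz] := boolP [&& D == 0, E == 0 & G == 0].
  have [A0 | A_nz] := eqVneq A 0.
    exists 1, 0, 0; split; rewrite ?Fq0 ?Fq1 ?oner_eq0 //.
    by rewrite /Q /ternary_form A0 D0 E0 G0; ring.
  have [t tF t2] := Fq_square (FqM BF (FqV AF)).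
  exists t, 1, 0; split; rewrite ?Fq0 ?Fq1 ?oner_eq0 ?orbT //.
  rewrite /Q /ternary_form t2 mulrC divfK // D0 E0 G0.
  by rewrite -[RHS](addrr_pchar2 L2 B); ring.
have [Qv0 | Qv_nz] := eqVneq (Q G E D) 0.
  by exists G, E, D; split => //; move: v_nz; rewrite -!negb_and; case: eqP; case: eqP; case: eqP.
have shift a b c : a \in F -> b \in F -> c \in F ->
    exists2 t, t \in F & Q (t * G + a) (t * E + b) (t * D + c) = 0.
  move=> aF bF cF; have [t tF t2] := Fq_square (FqM (QF a b c aF bF cF) (FqV (QF G E D GF EF DF))).
  by exists t; rewrite // /Q (ternary_form_shift L2) t2 divfK // (addrr_pchar2 L2).
have [G0 | G_nz] := eqVneq G 0.
  have [t tF Qt] := shift 1 0 0 Fq1 Fq0 Fq0.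
  exists (t * G + 1), (t * E + 0), (t * D + 0); split; rewrite ?FqD ?FqM ?Fq0 ?Fq1 //.
  by rewrite G0 mulr0 add0r oner_eq0.
have [t tF Qt] := shift 0 1 0 Fq0 Fq1 Fq0.
exists (t * G + 0), (t * E + 1), (t * D + 0); split; rewrite ?FqD ?FqM ?Fq0 ?Fq1 //.
by have [-> | t_nz] := eqVneq t 0; rewrite ?mul0r ?add0r ?oner_eq0 ?orbT // addr0 mulf_neq0.
Qed.

Section Vectors.
Variable n : nat.
Implicit Types (N : 'M[L]_n) (u v : 'cV[L]_n).

Lemma inFqnD u v : inFqn q u -> inFqn q v -> inFqn q (u + v).
Proof. by move=> /forallP uF /forallP vF; apply/forallP => i; rewrite mxE FqD. Qed.

Lemma inFqnZ a u : a \in F -> inFqn q u -> inFqn q (a *: u).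
Proof. by move=> aF /forallP uF; apply/forallP => i; rewrite mxE FqM. Qed.

Lemma inFqn_delta i : inFqn q (delta_mx i 0 : 'cV[L]_n).
Proof. by apply/forallP => j; rewrite mxE; case: (_ && _); [exact: Fq1 | exact: Fq0]. Qed.

Lemma bform_Fq N u v : (forall i j, N i j \in F) -> inFqn q u -> inFqn q v ->
  bform N u v \in F.
Proof.
move=> NF /forallP uF /forallP vF; rewrite bformE; apply: Fq_sum => i.
by rewrite FqM // mxE; apply: Fq_sum => j; rewrite FqM.
Qed.

Lemma herm_bform N u v : inFqn q u -> herm q u (N *m v) = bform N u v.
Proof.
by move=> /forallP uF; rewrite bformE; apply: eq_bigr => i _; have /[!inE]/eqP-> := uF i.
Qed.

Lemma herm_self u : inFqn q u -> herm q u u = (\sum_i u i 0) ^+ 2.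
Proof.
move=> /forallP uF; rewrite -[RHS](pFrobenius_autE L2) rmorph_sum; apply: eq_bigr => i _ /=.
by rewrite pFrobenius_autE expr2; have /[!inE]/eqP-> := uF i.
Qed.

End Vectors.

End Subfield.

Lemma Num0'q_subset_Num0' (L : finFieldType) q n (M : 'M[L]_n) : Num0'q q M \subset Num0' q M.
Proof. by apply: imsetS; apply/subsetP => u; rewrite !inE => /and3P[_ -> ->].  Qed.

Lemma Num0'_subset_Num0 (L : finFieldType) q n (M : 'M[L]_n) : Num0' q M \subset Num0 q M.
Proof. by apply: imsetS; apply/subsetP => u; rewrite !inE => /andP[_ ->]. Qed.

Section Num0q.
Variables (L : finFieldType) (k n : nat) (M : 'M[L]_n).
Hypotheses (k_gt0 : (0 < k)%N) (L2 : 2 \in [pchar L]).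
Hypothesis M_Fq : forall i j, M i j \in Fq L (2 ^ k).
Local Notation q := (2 ^ k)%N.
Local Notation F := (Fq L q).
Local Notation S := (Num0'q q M).
Local Notation e i := (delta_mx i 0 : 'cV[L]_n).

Lemma Num0'qP c :
  reflect (exists u, [/\ inFqn q u, u != 0, \sum_i u i 0 = 0 & qform M u = c]) (c \in S).
Proof.
apply: (iffP imsetP) => [[u] | [u [uF u_nz u_iso <-]]].
  rewrite inE => /and3P[uF u_nz u_iso] ->; exists u; split=> //.
    by apply/eqP; move: u_iso; rewrite herm_self // expf_eq0.
  by rewrite herm_bform.
exists u; last by rewrite herm_bform.
by rewrite inE uF u_nz herm_self // u_iso expr0n eqxx.
Qed.

Lemma Num0'q_subset_Fq : S \subset F.
Proof. by apply/subsetP => c /Num0'qP[u [uF _ _ <-]]; apply: bform_Fq. Qed.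

Lemma pair_sum_in_Num0'q i j : i != j -> M i i + M i j + M j i + M j j \in S.
Proof.
move=> ij; apply/Num0'qP; exists (e i + e j); split.
- by rewrite inFqnD ?inFqn_delta.
- apply/eqP => /matrixP/(_ i 0)/eqP; by rewrite !mxE eqxx (negPf ij) addr0 oner_eq0.
- by rewrite sum_colD !sum_col_delta (addrr_pchar2 L2).
- exact: (qform_delta_add M).
Qed.

Lemma Fqstar_subset_Num0'q c : c \in S -> c != 0 -> Fqstar L q \subset S.
Proof.
move=> /[dup] cS /Num0'qP[u [uF u_nz u_iso Qu]] c_nz.
apply/subsetP => d; rewrite in_setD1 => /andP[d_nz dF].
have cF := subsetP Num0'q_subset_Fq c cS.
have [t tF t2] := Fq_square k_gt0 (FqM dF (FqV cF)).
apply/Num0'qP; exists (t *: u); split.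
- exact: inFqnZ.
- rewrite scalemx_eq0 negb_or u_nz andbT; apply: contra d_nz => /eqP t0.
  by rewrite -(divfK c_nz d) -t2 t0 expr0n mul0r.
- by rewrite sum_colZ u_iso mulr0.
- by rewrite (qformZ M) t2 Qu divfK.
Qed.

Lemma qform_eq0_on_hyperplane :
  (forall i j : 'I_n, (i < j)%N -> M i i + M i j + M j i + M j j = 0) ->
  forall u : 'cV[L]_n, \sum_i u i 0 = 0 -> qform M u = 0.
Proof.
move=> M_pair u u_iso.
(* [f] is skew with zero diagonal; the remaining double sum is [(\sum_i u_i M_ii) (\sum_j u_j)]. *)
pose f i j := u i 0 * (M i j + M i i) * u j 0.
have -> : qform M u = \sum_i \sum_j f i j + \sum_i \sum_j u i 0 * M i i * u j 0.
  rewrite (qformE M) -big_split; apply: eq_bigr => i _; rewrite -big_split.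
  apply: eq_bigr => j _; rewrite /f /=.
  transitivity (u i 0 * (M i j + M i i + M i i) * u j 0); last by ring.
  by rewrite -addrA (addrr_pchar2 L2) addr0.
rewrite sum_skew_eq0 ?add0r.
- by rewrite big1 // => i _; rewrite -big_distrr /= u_iso mulr0.
- move=> i j; rewrite /f.
  transitivity (u i 0 * u j 0 * (M i i + M i j + M j i + M j j)); first by ring.
  have [ij | ji | /val_inj <-] := ltngtP i j; first by rewrite M_pair ?mulr0.
    have -> : M i i + M i j + M j i + M j j = M j j + M j i + M i j + M i i by ring.
    by rewrite M_pair ?mulr0.
  by rewrite (addrr_pchar2 L2) add0r (addrr_pchar2 L2) mulr0.
- by move=> i; rewrite /f (addrr_pchar2 L2) mulr0 mul0r.
Qed.

Lemma Num0'q_eq0 : (1 < n)%N ->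
  S = [set 0] <-> (forall i j : 'I_n, (i < j)%N -> M i i + M i j + M j i + M j j = 0).
Proof.
move=> n_gt1; split => [S0 i j ij | M_pair].
  by have := pair_sum_in_Num0'q (negbT (ltn_eqF ij)); rewrite S0 in_set1 => /eqP.
apply/setP => c; rewrite in_set1; apply/idP/eqP => [/Num0'qP[u [_ _ u_iso <-]] | ->].
  exact: qform_eq0_on_hyperplane.
pose i0 : 'I_n := Ordinal (ltnW n_gt1); pose i1 : 'I_n := Ordinal n_gt1.
by rewrite -(M_pair i0 i1) //; apply: pair_sum_in_Num0'q.
Qed.

Lemma Num0'q_neq_set0 : (1 < n)%N -> S != set0.
Proof.
move=> n_gt1; pose i0 : 'I_n := Ordinal (ltnW n_gt1); pose i1 : 'I_n := Ordinal n_gt1.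
by apply/set0Pn; exists (M i0 i0 + M i0 i1 + M i1 i0 + M i1 i1); apply: pair_sum_in_Num0'q.
Qed.

Lemma zero_in_Num0'q : (3 < n)%N -> 0 \in S.
Proof.
move=> n_gt3; pose o m (m_lt4 : (m < 4)%N) : 'I_n := Ordinal (leq_trans m_lt4 n_gt3).
pose i0 := o 0%N isT; pose i1 := o 1%N isT; pose i2 := o 2%N isT; pose i3 := o 3%N isT.
(* The vectors [e_0 + e_j], j = 1, 2, 3, span a 3-space inside the hyperplane. *)
pose f j := e i0 + e j.
have fF j : inFqn q (f j) by rewrite inFqnD ?inFqn_delta.
have f_iso j : \sum_l f j l 0 = 0 by rewrite sum_colD !sum_col_delta (addrr_pchar2 L2).
have BF j l : bform M (f j) (f l) \in F := bform_Fq L2 M_Fq (fF j) (fF l).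
have [a [b [c [aF bF cF abc_nz Q0]]]] := ternary_form_isotropic k_gt0 L2
  (BF i1 i1) (BF i2 i2) (BF i3 i3)
  (FqD L2 (BF i1 i2) (BF i2 i1)) (FqD L2 (BF i1 i3) (BF i3 i1)) (FqD L2 (BF i2 i3) (BF i3 i2)).
apply/Num0'qP; exists (a *: f i1 + b *: f i2 + c *: f i3); split.
- by rewrite !inFqnD ?inFqnZ.
- apply: contraTneq abc_nz => u0.
  have coord l : (a *: f i1 + b *: f i2 + c *: f i3) l 0 = 0 by rewrite u0 mxE.
  move: (coord i1) (coord i2) (coord i3); rewrite !mxE /= !(addr0, add0r, mulr0, mulr1) => -> -> ->.
  by rewrite !eqxx.
- by rewrite !sum_colD !sum_colZ !f_iso !mulr0 !addr0.
- by rewrite (qform_comb3 M).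
Qed.

End Num0q.

Lemma ord2_cases (i : 'I_2) : i = ord0 \/ i = ord_max.
Proof. by case: i => [[|[|//]] i_lt]; [left | right]; apply: val_inj. Qed.

Section Dim2.
Variables (L : finFieldType) (k : nat) (M : 'M[L]_2).
Hypotheses (k_gt0 : (0 < k)%N) (L2 : 2 \in [pchar L]).
Hypothesis M_Fq : forall i j, M i j \in Fq L (2 ^ k).
Local Notation q := (2 ^ k)%N.
Local Notation S := (Num0'q q M).
Local Notation e i := (delta_mx i 0 : 'cV[L]_2).

Lemma hyperplane_dim2 (u : 'cV[L]_2) :
  \sum_i u i 0 = 0 -> u = u ord0 0 *: (e ord0 + e ord_max).
Proof.
move=> u_iso; have u1 : u ord_max 0 = u ord0 0.
  apply/eqP; rewrite -subr_eq0 (oppr_pchar2 L2) addrC -u_iso (bigD1 ord0) //=.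
  rewrite (bigD1 ord_max) //= big1 ?addr0 // => i /andP[].
  by case: (ord2_cases i) => ->.
apply/matrixP => i j; rewrite ord1 !mxE.
by case: (ord2_cases i) => ->; rewrite ?u1 /= !(addr0, add0r, mulr1).
Qed.

Lemma Num0'q_dim2 : S != [set 0] -> S = Fqstar L q.
Proof.
move=> S_nz; set a := M ord0 ord0 + M ord0 ord_max + M ord_max ord0 + M ord_max ord_max.
have aS : a \in S by apply: pair_sum_in_Num0'q.
have a_nz : a != 0.
  apply: contra S_nz => /eqP a0; apply/eqP/(Num0'q_eq0 k M L2 isT) => i j.
  by case: (ord2_cases i) => ->; case: (ord2_cases j) => ->.
apply/eqP; rewrite eqEsubset (Fqstar_subset_Num0'q k_gt0 L2 M_Fq aS a_nz) andbT.
apply/subsetP => c cS; rewrite in_setD1 (subsetP (Num0'q_subset_Fq L2 M_Fq) c cS) andbT.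
case/(Num0'qP k M L2): cS => u [_ u_nz /hyperplane_dim2 u_def <-].
rewrite u_def (qformZ M) (qform_delta_add M) mulf_neq0 // expf_neq0 //.
by apply: contraNneq u_nz => u0; rewrite u_def u0 scale0r.
Qed.

End Dim2.

Theorem proposition6 (L : finFieldType) (k n : nat) (M : 'M[L]_n) :
  (0 < k)%N -> #|L| = ((2 ^ k) ^ 2)%N -> (2 <= n)%N ->
  (forall i j, M i j \in Fq L (2 ^ k)) ->
  let q := (2 ^ k)%N in
  (* (a) *)
  (Num0'q q M != set0 /\
   (0 \in Num0' q M \/ Fqstar L q \subset Num0 q M)) /\
  (* (b) *)
  (Num0'q q M = [set 0] <->
   (forall i j : 'I_n, (i < j)%N -> M i i + M i j + M j i + M j j = 0)) /\
  (* (c) *)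
  (Num0'q q M != [set 0] ->
   (n = 2%N -> Num0'q q M = Fqstar L q) /\
   (n = 3%N -> Fqstar L q \subset Num0'q q M) /\
   ((4 <= n)%N -> Num0'q q M = Fq L q)).
Proof.
move=> k_gt0 cardL n_gt1 M_Fq q.
have L2 : 2 \in [pchar L] by apply: (@card_finPcharP _ _ (k * 2)); rewrite ?cardL ?expnM.
have S_ne0 := Num0'q_neq_set0 k M L2 n_gt1.
have S_star : Num0'q q M != [set 0] -> Fqstar L q \subset Num0'q q M.
  move=> S_nz; have /subsetPn[c cS] : ~~ (Num0'q q M \subset [set 0]).
    by rewrite subset1 negb_or S_nz.
  by rewrite in_set1; apply: Fqstar_subset_Num0'q.
split; first split => //.
  have [S0 | S_nz] := eqVneq (Num0'q q M) [set 0].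
    by left; apply: (subsetP (Num0'q_subset_Num0' q M)); rewrite S0 set11.
  right; apply: subset_trans (S_star S_nz) _.
  exact: subset_trans (Num0'q_subset_Num0' q M) (Num0'_subset_Num0 q M).
split; first exact: Num0'q_eq0.
move=> S_nz; split; [move=> n2 | split=> [_ | n_gt3]].
- by subst n; apply: Num0'q_dim2.
- exact: S_star.
- apply/eqP; rewrite eqEsubset Num0'q_subset_Fq //=; apply/subsetP => d dF.
  have [-> | d_nz] := eqVneq d 0; first exact: zero_in_Num0'q.
  by apply: (subsetP (S_star S_nz)); rewrite in_setD1 d_nz.
Qed.
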